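(* Let $R=[0,1]^2$, $s\in\mathbb{N}$ and $u=2^{-s}$. If $u\le2^{-5/2}$, then the $4$-dimensional volume of the union $\mathcal{B}_{non\text{-}diag}$ of all non-diagonal box pairs satisfies $\mathrm{vol}(\mathcal{B}_{non\text{-}diag})\le\sqrt2\,u^{1/5}$.
   Context: For $p,q\in\mathbb{R}^2$ write $p\le q$ if both coordinates satisfy $\le$. $R$ is split into $2^s\times2^s$ congruent closed squares (''boxes'') of side length $u$. A box pair is an ordered pair $(B_1,B_2)$ of boxes, viewed as $B_1\times B_2\subset\mathbb{R}^4$, with centers $c_1,c_2$. Let $\mathcal{L}$ be the set of non-vertical lines in $\mathbb{R}^2$ with positive slope; for $\ell\in\mathcal{L}$ with unit direction vector $a=(a_1,a_2)$ (positive coordinates) set $\hat{\ell}:=\min\{a_1,a_2\}$. A line $\ell\in\mathcal{L}$ traverses $(B_1,B_2)$ if it meets both $B_1$ and $B_2$. A box pair is non-diagonal if $c_1\le c_2$, $\|c_1-c_2\|_2\ge\sqrt u$, and every $\ell\in\mathcal{L}$ traversing $(B_1,B_2)$ satisfies $\hat{\ell}<u^{1/5}$. $\mathrm{vol}$ denotes $4$-dimensional Lebesgue measure. *)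

From HB Require Import structures.
From mathcomp Require Import all_boot all_order all_algebra.
From mathcomp Require Import all_classical all_reals all_analysis.
Unset Printing Implicit Defensive.
Import Order.TTheory GRing.Theory Num.Theory.
Import numFieldNormedType.Exports.
Local Open Scope classical_set_scope.
Local Open Scope ring_scope.

Definition le2 {R : realType} (p q : R * R) : Prop := p.1 <= q.1 /\ p.2 <= q.2.

Definition dist2 {R : realType} (p q : R * R) : R :=
  Num.sqrt ((p.1 - q.1) ^+ 2 + (p.2 - q.2) ^+ 2).

Definition side {R : realType} (s : nat) : R := (2 ^+ s)^-1.

Definition box {R : realType} (s : nat) (ij : 'I_(2 ^ s) * 'I_(2 ^ s)) : set (R * R) :=
  [set p : R * R | (ij.1)%:R * side s <= p.1 <= ((ij.1).+1)%:R * side s /\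
           (ij.2)%:R * side s <= p.2 <= ((ij.2).+1)%:R * side s].

Definition center {R : realType} (s : nat) (ij : 'I_(2 ^ s) * 'I_(2 ^ s)) : R * R :=
  (((ij.1)%:R + 2^-1) * side s, ((ij.2)%:R + 2^-1) * side s).

(* A line in L (non-vertical, positive slope) is {p + t a | t in R} where
   a = (a1, a2) is its unit direction vector with positive coordinates;
   hat(l) = min(a1, a2). *)
Definition unit_pos_dir {R : realType} (a : R * R) : Prop :=
  0 < a.1 /\ 0 < a.2 /\ a.1 ^+ 2 + a.2 ^+ 2 = 1.

Definition line {R : realType} (p a : R * R) : set (R * R) :=
  [set q | exists t : R, q = (p.1 + t * a.1, p.2 + t * a.2)].

Definition lhat {R : realType} (a : R * R) : R := Num.min a.1 a.2.

Definition traverses {R : realType} (l B1 B2 : set (R * R)) : Prop :=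
  (l `&` B1 !=set0) /\ (l `&` B2 !=set0).

Definition non_diagonal {R : realType} (s : nat)
    (b1 b2 : 'I_(2 ^ s) * 'I_(2 ^ s)) : Prop :=
  le2 (center (R := R) s b1) (center s b2) /\
  Num.sqrt (side (R := R) s) <= dist2 (center (R := R) s b1) (center s b2) /\
  (forall p a : R * R, unit_pos_dir a ->
     traverses (line p a) (box s b1) (box s b2) ->
     lhat a < (side s : R) `^ (5%:R^-1)).

Definition B_nondiag {R : realType} (s : nat) : set ((R * R) * (R * R)) :=
  \bigcup_(b in [set b : ('I_(2 ^ s) * 'I_(2 ^ s)) * ('I_(2 ^ s) * 'I_(2 ^ s))
                 | non_diagonal (R := R) s b.1 b.2])
     (box s b.1 `*` box s b.2).

Definition vol4 {R : realType} : set ((R * R) * (R * R)) -> \bar R :=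
  ((@lebesgue_measure R \x @lebesgue_measure R) \x
   (@lebesgue_measure R \x @lebesgue_measure R))%E.

From Pilot Require Import Defs.
From HB Require Import structures.
From mathcomp Require Import all_boot all_order all_algebra.
From mathcomp Require Import all_classical all_reals all_analysis.
From mathcomp Require Import zify lra.
Import Order.TTheory GRing.Theory Num.Theory.
Local Open Scope classical_set_scope.
Local Open Scope ring_scope.

(* Write N = 2^s, so that u = 1/N and every box pair has volume N^-4.  If
   the pair (i1, j1), (i2, j2) is non-diagonal then i1 <= i2 and j1 <= j2, and
   the line through the lower-left corner of the first box and the upper-right
   corner of the second has a direction proportional to (A, B), where
   A = i2 - i1 + 1 and B = j2 - j1 + 1.  Its hat is min(A, B) / sqrt(A^2 + B^2)
   < u^(1/5) and sqrt(A^2 + B^2) <= sqrt 2 max(A, B), so A < c B or B < c A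
   with c = sqrt 2 u^(1/5).  Given i1 and j1 <= j2, at most c B values of i2
   satisfy A < c B, so there are at most c N sum_{j1 <= j2} B
   = c N^2 (N + 1) (N + 2) / 6 pairs of the first kind, as many of the second,
   and 2 c N^2 (N + 1) (N + 2) / 6 <= c N^4 once N >= 2, which is all the
   hypothesis on u is needed for. *)

Section span_sum.
Local Open Scope nat_scope.

Definition span_sum N := \sum_(j1 < N) \sum_(j2 < N | j1 <= j2) (j2 - j1).+1.

Lemma span_sumS N : span_sum N.+1 = span_sum N + \sum_(j < N.+1) j.+1.
Proof.
rewrite /span_sum big_ord_recl addnC; congr (_ + _).
  apply: eq_bigr => j1 _; rewrite big_mkcond big_ord_recl /= add0n [RHS]big_mkcond.
  by apply: eq_bigr => j2 _; rewrite /bump !add1n ltnS subSS.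
by rewrite big_mkcond; apply: eq_bigr => j _; rewrite subn0.
Qed.

Lemma span_sumE N : 6 * span_sum N = N * N.+1 * N.+2.
Proof.
have triE n : 2 * \sum_(j < n) j.+1 = n * n.+1.
  by elim: n => [|n IH]; rewrite ?big_ord0 // big_ord_recr /= mulnDr IH; lia.
elim: N => [|N IH]; first by rewrite /span_sum big_ord0.
by rewrite span_sumS mulnDr IH; have := triE N.+1; lia.
Qed.

Lemma span_sum_le N : 2 <= N -> 2 * span_sum N <= N ^ 3.
Proof. by have := span_sumE N; nia. Qed.

End span_sum.

Lemma sigma_finite_product_measure d1 d2 (T1 : measurableType d1)
    (T2 : measurableType d2) (R : realType)
    (m1 : {sigma_finite_measure set T1 -> \bar R})
    (m2 : {sigma_finite_measure set T2 -> \bar R}) :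
  sigma_finite setT (m1 \x m2)%E.
Proof.
have /sigma_finiteP[F [F_T F_nd F_fin]] := sigma_finiteT m1.
have /sigma_finiteP[G [G_T G_nd G_fin]] := sigma_finiteT m2.
exists (fun n => F n `*` G n); last first.
  move=> n; have [mF Fn_fin] := F_fin n; have [mG Gn_fin] := G_fin n.
  split; first exact: measurableX.
  by rewrite product_measure1E // lte_mul_pinfty // ge0_fin_numE.
apply/seteqP; split => [[x y] _|//].
have [n _ Fx] : (\bigcup_n F n) x by rewrite -F_T.
have [k _ Gy] : (\bigcup_k G k) y by rewrite -G_T.
exists (maxn n k) => //; split.
- by move: Fx; apply/subsetPset/F_nd/leq_maxl.
- by move: Gy; apply/subsetPset/G_nd/leq_maxr.
Qed.

(* Naming the planar product measure lets us declare it sigma-finite, which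
   product_measure1E requires of the second factor of vol4. *)
Definition lebesgue_measure2 (R : realType) :=
  (@lebesgue_measure R \x @lebesgue_measure R)%E.

HB.instance Definition _ (R : realType) := Measure.on (lebesgue_measure2 R).
HB.instance Definition _ (R : realType) :=
  Measure_isSigmaFinite.Build _ _ _ (lebesgue_measure2 R)
    (sigma_finite_product_measure _ _ _ _ _ lebesgue_measure lebesgue_measure).

Section grid.
Variable R : realType.

Lemma side_gt0 s : 0 < side (R := R) s.
Proof. by rewrite invr_gt0 exprn_gt0. Qed.

Lemma boxE s ij : box (R := R) s ij =
  `[ij.1%:R * side s, ij.1.+1%:R * side s] `*`
  `[ij.2%:R * side s, ij.2.+1%:R * side s].
Proof. by apply/seteqP; split => p /=; rewrite !in_itv. Qed.

Lemma measurable_box s ij : measurable (box (R := R) s ij).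
Proof. by rewrite boxE; apply: measurableX; exact: measurable_itv. Qed.

Lemma lebesgue_measure2_box s ij : lebesgue_measure2 R (box s ij) = (side s ^+ 2)%:E.
Proof.
have lt_k (k : nat) : k%:R * side (R := R) s < k.+1%:R * side s.
  by rewrite ltr_pM2r ?side_gt0 // ltr_nat.
have len_k (k : nat) : k.+1%:R * side (R := R) s - k%:R * side s = side s.
  by rewrite -mulrBl -natrB // subSnn mul1r.
rewrite boxE /lebesgue_measure2 product_measure1E; try exact: measurable_itv.
by rewrite /= !lebesgue_measure_itv /= !lte_fin !lt_k -!EFinD !len_k -EFinM expr2.
Qed.

Lemma vol4_box_pair s b1 b2 : vol4 (box (R := R) s b1 `*` box s b2) = (side s ^+ 4)%:E.
Proof.
rewrite [LHS](product_measure1E (lebesgue_measure2 R) (lebesgue_measure2 R)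
  (measurable_box s b1) (measurable_box s b2)) (exprD _ 2 2) EFinM.
by congr (_ * _)%E; exact: lebesgue_measure2_box.
Qed.

End grid.

Section direction.
Context {R : realType}.
Implicit Types (p v : R * R) (t : R).

Definition norm2 v : R := Num.sqrt (v.1 ^+ 2 + v.2 ^+ 2).

Definition normalize v : R * R := (v.1 / norm2 v, v.2 / norm2 v).

Lemma norm2_gt0 v : 0 < v.1 -> 0 < norm2 v.
Proof. by move=> v1; rewrite sqrtr_gt0 ltr_wpDr ?sqr_ge0 ?exprn_gt0. Qed.

Lemma unit_pos_dir_normalize v : 0 < v.1 -> 0 < v.2 -> unit_pos_dir (normalize v).
Proof.
move=> v1 v2; have n_gt0 := norm2_gt0 _ v1.
split; [exact: divr_gt0 | split; first exact: divr_gt0].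
rewrite /= !expr_div_n -mulrDl sqr_sqrtr ?addr_ge0 ?sqr_ge0 //.
by rewrite divff // gt_eqF // ltr_wpDr ?sqr_ge0 ?exprn_gt0.
Qed.

Lemma line_base p v : line p v p.
Proof. by exists 0; rewrite !mul0r !addr0; case: p. Qed.

Lemma line_normalize p v : 0 < v.1 -> line p (normalize v) (p.1 + v.1, p.2 + v.2).
Proof.
move=> v1; exists (norm2 v).
by rewrite /= ![norm2 v * _]mulrC !divfK // gt_eqF // norm2_gt0.
Qed.

Lemma norm2_le_max v : 0 < v.1 -> 0 < v.2 -> norm2 v <= Num.sqrt 2 * Num.max v.1 v.2.
Proof.
move=> v1 v2; have m_ge0 : 0 <= Num.max v.1 v.2 by rewrite le_max ltW.
rewrite -[X in _ * X]ger0_norm // -sqrtr_sqr -sqrtrM ?ler0n // ler_wsqrtr //.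
have [le_12|lt_21] := leP v.1 v.2.
  by rewrite mulr_natl mulr2n lerD2r; nra.
by rewrite mulr_natl mulr2n lerD2l; nra.
Qed.

Lemma lhat_normalize_lt v t : 0 < v.1 -> 0 < v.2 -> lhat (normalize v) < t ->
  v.1 < Num.sqrt 2 * t * v.2 \/ v.2 < Num.sqrt 2 * t * v.1.
Proof.
move=> v1 v2; have n_gt0 := norm2_gt0 _ v1.
rewrite /lhat /normalize /= -minr_pMl ?invr_ge0 ?ltW // ltr_pdivrMr // => min_lt.
have t_gt0 : 0 < t.
  by rewrite -(pmulr_lgt0 _ n_gt0); apply: lt_trans min_lt; rewrite lt_min v1.
have := lt_le_trans min_lt (ler_wpM2l (ltW t_gt0) (norm2_le_max _ v1 v2)).
rewrite mulrA [t * _]mulrC.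
by have [le_12|lt_21] := leP v.1 v.2; [left|right].
Qed.

End direction.

Section box_pairs.
Context {R : realType} {N : nat}.
Local Notation pair := (('I_N * 'I_N) * ('I_N * 'I_N))%type.
Implicit Types (b : pair) (c : R).

Definition tall c b : bool :=
  [&& (b.1.1 <= b.2.1)%N, (b.1.2 <= b.2.2)%N &
      (b.2.1 - b.1.1).+1%:R < c * (b.2.2 - b.1.2).+1%:R].

Definition swap_xy b : pair := ((b.1.2, b.1.1), (b.2.2, b.2.1)).

Lemma swap_xyK : involutive swap_xy.
Proof. by case=> [[? ?] [? ?]]. Qed.

Lemma card_shift_lt (i0 : nat) (X : R) : 0 <= X ->
  #|[pred i : 'I_N | (i0 <= i)%N && ((i - i0).+1%:R < X)]|%:R <= X.
Proof.
move=> X_ge0; have trunc_le : (Num.truncn X)%:R <= X by rewrite truncn_le.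
apply: le_trans _ trunc_le.
rewrite ler_nat cardE -(size_map val) -(size_iota i0 (Num.truncn X)).
apply: uniq_leq_size; first by rewrite map_inj_uniq ?enum_uniq //; exact: val_inj.
move=> x /mapP[i]; rewrite mem_enum /= => /andP[le_i0i lt_X] ->.
have : ((i - i0)%N < Num.truncn X)%N by rewrite truncn_gt_nat ltW.
by rewrite mem_iota; lia.
Qed.

Lemma card_tall c : 0 <= c -> #|tall c|%:R <= c * N%:R * (span_sum N)%:R.
Proof.
move=> c_ge0.
have sum_pair (I J : finType) (F : I * J -> R) :
    \sum_(p : I * J) F p = \sum_(i : I) \sum_(j : J) F (i, j).
  by rewrite pair_bigA; apply: eq_bigr => -[].
have -> : c * N%:R * (span_sum N)%:R =
    \sum_(i1 < N) \sum_(j1 < N) \sum_(j2 < N | (j1 <= j2)%N) c * (j2 - j1).+1%:R.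
  rewrite [RHS]sumr_const card_ord -[RHS]mulr_natr mulrAC; congr (_ * _).
  rewrite /span_sum natr_sum mulr_sumr; apply: eq_bigr => j1 _.
  by rewrite natr_sum mulr_sumr.
rewrite -sumr_const big_mkcond !sum_pair; apply: ler_sum => i1 _; apply: ler_sum => j1 _.
rewrite sum_pair exchange_big [leRHS]big_mkcond; apply: ler_sum => j2 _ /=.
case: (leqP j1 j2) => [le_j12|lt_j21].
  apply: le_trans (card_shift_lt i1 _ _); last by rewrite mulr_ge0.
  rewrite -sumr_const [leRHS]big_mkcond; apply: ler_sum => i2 _.
  by rewrite unfold_in /tall /= le_j12.
by rewrite big1 // => i2 _; rewrite unfold_in /tall /= (ltn_geF lt_j21) andbF.
Qed.

Lemma card_preim_swap_xy (P : pred pair) : #|[preim swap_xy of P]| = #|P|.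
Proof.
rewrite card_preim; last exact: inv_inj swap_xyK.
by apply: eq_card => b; rewrite inE -{1}[b]swap_xyK codom_f.
Qed.

End box_pairs.

Section non_diagonal.
Variables (R : realType) (s : nat).
Local Notation u := (side s : R).
Local Notation c := (Num.sqrt 2 * u `^ 5%:R^-1).

Lemma le_center_index (b1 b2 : 'I_(2 ^ s) * 'I_(2 ^ s)) :
  le2 (Defs.center (R := R) s b1) (Defs.center s b2) ->
  (b1.1 <= b2.1)%N /\ (b1.2 <= b2.2)%N.
Proof. by case=> /=; rewrite !ler_pM2r ?side_gt0 // !lerD2r !ler_nat. Qed.

Lemma non_diagonal_tall b :
  non_diagonal (R := R) s b.1 b.2 -> tall c b || tall c (swap_xy b).
Proof.
case: b => [[i1 j1] [i2 j2]] [/le_center_index /= [le_i le_j] [_ lhat_lt]].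
have u_gt0 := side_gt0 R s.
pose p := (i1%:R * u, j1%:R * u).
pose v := ((i2 - i1).+1%:R * u, (j2 - j1).+1%:R * u).
have v1 : 0 < v.1 by rewrite mulr_gt0.
have v2 : 0 < v.2 by rewrite mulr_gt0.
have grid_le (k : nat) : k%:R * u <= k.+1%:R * u by rewrite ler_pM2r // ler_nat.
have corner (k l : nat) : (k <= l)%N -> k%:R * u + (l - k).+1%:R * u = l.+1%:R * u.
  by move=> le_kl; rewrite -mulrDl -natrD addnS subnKC.
have p_box : box s (i1, j1) p by split; rewrite /= lexx grid_le.
have pv_box : box s (i2, j2) (p.1 + v.1, p.2 + v.2).
  by split; rewrite /= corner // grid_le lexx.
have traverse : traverses (line p (normalize v)) (box s (i1, j1)) (box s (i2, j2)).
  by split; [exists p; split; first exact: line_base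
            | exists (p.1 + v.1, p.2 + v.2); split; first exact: line_normalize].
have := lhat_lt p _ (unit_pos_dir_normalize v v1 v2) traverse.
case/lhat_normalize_lt => // [tall_v|flat_v]; apply/orP; [left|right].
  by rewrite /tall /= le_i le_j /= -(ltr_pM2r u_gt0) -mulrA.
by rewrite /tall /= le_i le_j /= -(ltr_pM2r u_gt0) -mulrA.
Qed.

Lemma card_non_diagonal_le :
  (#|[pred b | `[< non_diagonal (R := R) s b.1 b.2 >]]| <= 2 * #|tall (N := 2 ^ s) c|)%N.
Proof.
rewrite mul2n -addnn -{2}(card_preim_swap_xy (tall c)) -cardUI.
apply: leq_trans (leq_addr _ _); apply: subset_leq_card; apply/fintype.subsetP => b.
by rewrite !inE => /non_diagonal_tall.
Qed.

End non_diagonal.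

Lemma vol4_B_nondiag_le (R : realType) s :
  (vol4 (B_nondiag (R := R) s) <=
   (#|[pred b | `[< non_diagonal (R := R) s b.1 b.2 >]]|%:R * side s ^+ 4)%:E)%E.
Proof.
set P := [pred b | _].
have D_enum : [set b | non_diagonal (R := R) s b.1 b.2] = [set` enum P].
  by apply/seteqP; split => b; rewrite /= mem_enum /P inE.
change vol4 with (lebesgue_measure2 R \x lebesgue_measure2 R)%E.
rewrite /B_nondiag D_enum.
apply: le_trans.
  apply: (@content_sub_fsum _ _ _ (lebesgue_measure2 R \x lebesgue_measure2 R)%E
    _ [set` enum P] _ (fun b => box s b.1 `*` box s b.2) finite_finset) => //.
    by move=> b _; apply: measurableX; exact: measurable_box.
  apply: fin_bigcup_measurable finite_finset _ => b _.
  by apply: measurableX; exact: measurable_box.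
rewrite -fsbig_seq ?enum_uniq // big_enum /=.
rewrite (eq_bigr (fun=> (side s ^+ 4)%:E)); last by move=> b _; exact: vol4_box_pair.
by rewrite sumEFin sumr_const mulr_natl.
Qed.

Lemma two_le_grid_size (R : realType) s : (side s : R) < 1 -> (2 <= 2 ^ s)%N.
Proof.
case: s => [|s _]; first by rewrite /side expr0 invr1 ltxx.
by rewrite expnS leq_pmulr ?expn_gt0.
Qed.

Theorem lemma5 (R : realType) (s : nat) :
  (side s : R) <= (2 : R) `^ (- (5%:R / 2%:R)) ->
  (vol4 (B_nondiag (R := R) s) <= (Num.sqrt 2 * (side s : R) `^ (5%:R^-1))%:E)%E.
Proof.
move=> small_side; set N := (2 ^ s)%N; set c := Num.sqrt 2 * _.
have N_ge2 : (2 <= N)%N.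
  apply: (two_le_grid_size R); apply: le_lt_trans small_side _.
  rewrite powRN invf_lt1 ?powR_gt0 //.
  by apply: lt_le_trans (le1r_powR _ _); rewrite ?ler1n ?ltr1n // ler_pdivlMr //; lra.
have c_gt0 : 0 < c by rewrite mulr_gt0 ?sqrtr_gt0 ?powR_gt0 ?side_gt0.
apply: le_trans (vol4_B_nondiag_le R s) _; rewrite lee_fin.
have -> : side s ^+ 4 = (N%:R ^+ 4)^-1 :> R by rewrite /side natrX exprVn -!exprM mulnC.
rewrite ler_pdivrMr ?exprn_gt0 ?ltr0n ?expn_gt0 //.
apply: le_trans (_ : (2 * #|tall c|)%:R <= _).
  by rewrite ler_nat; exact: card_non_diagonal_le.
apply: le_trans (_ : 2 * (c * N%:R * (span_sum N)%:R) <= _).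
  by rewrite natrM ler_pM2l // card_tall // ltW.
rewrite mulrCA -mulrA -natrM exprS !ler_pM2l ?ltr0n ?expn_gt0 //.
by rewrite -natrX ler_nat span_sum_le.
Qed.
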